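(* Consider an arbitrary sequence of instances $\{\mathcal{I}_N\}$ of the binary voting game and an arbitrary sequence of strategy profiles $\{\Sigma_N\}_{N\ge1}$ ($\Sigma_N$ a profile in $\mathcal{I}_N$), and let $f^N$ be the excess expected vote share of $\Sigma_N$. (i) If $\liminf_{N\to\infty}\sqrt N f^N=+\infty$, then $\lim_{N\to\infty}A(\Sigma_N)=1$. (ii) If $\liminf_{N\to\infty}\sqrt N f^N<0$ (including $-\infty$), then $A(\Sigma_N)$ does not converge to $1$. (iii) If $0\le\liminf_{N\to\infty}\sqrt N f^N<+\infty$ and there is a constant $\psi>0$ such that $\mathrm{Var}\big(\sum_{n=1}^N X_n^N\mid W=w\big)\ge\psi N$ for every $N$ and every state $w\in\{L,H\}$, then $A(\Sigma_N)$ does not converge to $1$.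
   Context: Binary voting game. An instance has $N$ agents each voting for $\mathbf{A}$ or $\mathbf{R}$. Unobserved world state $W\in\{L,H\}$ with common prior $P_L,P_H>0$. Conditional on $W$, each agent independently receives a signal $S_n\in\{l,h\}$ with $P_{sw}=\Pr[S_n=s\mid W=w]$, $P_{hH}>P_{hL}$, $P_{lH}<P_{lL}$. With threshold $\mu\in(0,1)$, $\mathbf{A}$ wins iff at least $\mu N$ agents vote $\mathbf{A}$, else $\mathbf{R}$ wins. Agent $n$ has utility $v_n:\{L,H\}\times\{\mathbf{A},\mathbf{R}\}\to\{0,\dots,B\}$ with $v_n(H,\mathbf{A})>v_n(L,\mathbf{A})$, $v_n(H,\mathbf{R})<v_n(L,\mathbf{R})$; agents are friendly, unfriendly or contingent, with counts $\lfloor\alpha_F N\rfloor$, $\lfloor\alpha_U N\rfloor$ and the rest, for fixed $\alpha_F,\alpha_U,\alpha_C\ge0$ summing to 1, $\alpha_F<\mu$, $\alpha_U<1-\mu$; the informed majority decision is $\mathbf{A}$ in $H$ and $\mathbf{R}$ in $L$. A sequence of instances $\{\mathcal{I}_N\}$: $\mathcal{I}_N$ has $N$ agents; all share $\mu$, prior, signal distribution, $\alpha$'s; utilities arbitrary. Strategy $\sigma=(\beta_l,\beta_h)$, $\beta_s$ = probability of voting $\mathbf{A}$ on signal $s$; profile $\Sigma=(\sigma_1,\dots,\sigma_N)$. Fidelity $A(\Sigma)=P_L\lambda^{\mathbf{R}}_L(\Sigma)+P_H\lambda^{\mathbf{A}}_H(\Sigma)$, where $\lambda^{\mathbf{X}}_w(\Sigma)$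 is the ex-ante probability that $\mathbf{X}$ wins in state $w$. For the profile $\Sigma_N$, let $X_n^N=1$ if agent $n$ votes $\mathbf{A}$ and $0$ otherwise. Excess expected vote share: $f^N_H=\frac1N\sum_{n=1}^N E[X_n^N\mid W=H]-\mu$, $f^N_L=\frac1N\sum_{n=1}^N E[1-X_n^N\mid W=L]-(1-\mu)$, and $f^N=\min(f^N_H,f^N_L)$. *)

From HB Require Import structures.
From mathcomp Require Import all_boot all_order all_algebra.
From mathcomp Require Import all_classical all_reals all_analysis.
Set Implicit Arguments. Unset Strict Implicit. Unset Printing Implicit Defensive.
Import Order.TTheory GRing.Theory Num.Theory.
Local Open Scope ring_scope.

Inductive state := L | H.

Section Game.
Variable R : realType.

(* Signal distribution: signal [true] = h, [false] = l.
   PhL = P_{hL}, PhH = P_{hH}; P_{lw} = 1 - P_{hw}. *)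
Definition psig (PhL PhH : R) (w : state) (s : bool) : R :=
  let p := if w is H then PhH else PhL in if s then p else 1 - p.

(* A strategy is the pair (beta_l, beta_h) of probabilities of voting A
   on signal l resp. h.  A profile for N agents assigns one to each agent. *)
Definition strategy := (R * R)%type.
Definition valid_strategy (sg : strategy) : Prop :=
  0 <= sg.1 <= 1 /\ 0 <= sg.2 <= 1.

(* probability that an agent with strategy sg and signal s casts vote x
   (x = true means a vote for A). *)
Definition pvote (sg : strategy) (s : bool) (x : bool) : R :=
  let b := if s then sg.2 else sg.1 in if x then b else 1 - b.

Definition jprob (PhL PhH : R) (w : state) N (Sig : 'I_N -> strategy)
  (s x : {ffun 'I_N -> bool}) : R :=
  \prod_(n < N) (psig PhL PhH w (s n) * pvote (Sig n) (s n) (x n)).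

Definition condE (PhL PhH : R) (w : state) N (Sig : 'I_N -> strategy)
  (F : {ffun 'I_N -> bool} -> R) : R :=
  \sum_(s : {ffun 'I_N -> bool}) \sum_(x : {ffun 'I_N -> bool})
     jprob PhL PhH w Sig s x * F x.

Definition nA N (x : {ffun 'I_N -> bool}) : R := (#|[set n | x n]|)%:R.
Definition Xn N (n : 'I_N) (x : {ffun 'I_N -> bool}) : R := (x n)%:R.

Definition Awins (mu : R) N (x : {ffun 'I_N -> bool}) : bool :=
  mu * N%:R <= nA x.

Definition lambdaA mu PhL PhH w N (Sig : 'I_N -> strategy) : R :=
  condE PhL PhH w Sig (fun x => if Awins mu x then 1 else 0).
Definition lambdaR mu PhL PhH w N (Sig : 'I_N -> strategy) : R :=
  condE PhL PhH w Sig (fun x => if Awins mu x then 0 else 1).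

Definition fidelity mu PL PH PhL PhH N (Sig : 'I_N -> strategy) : R :=
  PL * lambdaR mu PhL PhH L Sig + PH * lambdaA mu PhL PhH H Sig.

Definition fH mu PhL PhH N (Sig : 'I_N -> strategy) : R :=
  N%:R^-1 * (\sum_(n < N) condE PhL PhH H Sig (Xn n)) - mu.
Definition fL mu PhL PhH N (Sig : 'I_N -> strategy) : R :=
  N%:R^-1 * (\sum_(n < N) condE PhL PhH L Sig (fun x => 1 - Xn n x)) - (1 - mu).
Definition fexcess mu PhL PhH N (Sig : 'I_N -> strategy) : R :=
  Num.min (fH mu PhL PhH Sig) (fL mu PhL PhH Sig).

Definition condVar PhL PhH w N (Sig : 'I_N -> strategy) : R :=
  condE PhL PhH w Sig (fun x => nA x ^+ 2) - (condE PhL PhH w Sig (@nA N)) ^+ 2.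

End Game.

(* Given the state w, the votes are independent Bernoulli variables, so the number
   of A votes is a sum of independent indicators whose mean lies N f_w beyond the
   threshold mu N on the correct side and whose variance is at most N / 4.
   If sqrt N f -> +oo, Chebyshev's inequality bounds both error probabilities by
   1 / (4 (sqrt N f)^2).  If sqrt N f < a < 0 infinitely often, the mean lies on
   the wrong side of the threshold and a one-sided Chebyshev bound keeps an error
   probability above min (1/2) a^2.  If sqrt N f < K infinitely often and the
   variance is at least psi N, anti-concentration comes without a central limit
   theorem: cut the voters into M ~ K^2 / psi consecutive blocks of almost equal
   variance; by a fourth-moment (Paley-Zygmund) argument each block sum falls
   K sqrt N / M below its mean with probability at least 1/256, so by independence
   all of them do, pushing the total below the threshold, with probability at
   least 256^-M. *)

From HB Require Import structures.
From mathcomp Require Import all_boot all_order all_algebra.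
From mathcomp Require Import all_classical all_reals all_analysis.
From mathcomp Require Import ring lra.
Import Order.TTheory GRing.Theory Num.Theory.
Import numFieldNormedType.Exports.
Set Implicit Arguments. Unset Strict Implicit. Unset Printing Implicit Defensive.
Local Open Scope ring_scope.

Lemma sqr_le_abs_quartic (R : realFieldType) (s z : R) : 0 <= s ->
  8 * s ^+ 2 * z ^+ 2 <= 16 * s ^+ 3 * `|z| + z ^+ 4.
Proof.
move=> s_ge0; have z2 : z ^+ 2 = `|z| ^+ 2 by rewrite real_normK ?num_real.
have z4 : z ^+ 4 = `|z| ^+ 4 by rewrite -normrX ger0_norm // exprn_even_ge0.
rewrite z2 z4 -subr_ge0; move: (normr_ge0 z); set a := `|z| => a_ge0.
have -> : 16 * s ^+ 3 * a + a ^+ 4 - 8 * s ^+ 2 * a ^+ 2 =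
    a * ((a - 2 * s) ^+ 2 * (a + 4 * s) + 4 * s ^+ 2 * a) by ring.
apply: mulr_ge0 => //; apply: addr_ge0; apply: mulr_ge0; rewrite ?sqr_ge0 //.
- by apply: addr_ge0 => //; apply: mulr_ge0.
- by apply: mulr_ge0 => //; apply: sqr_ge0.
Qed.

Lemma min_half_le (R : realFieldType) (a p : R) :
  0 <= p -> a ^+ 2 * (1 - p) ^+ 2 <= p / 4 -> Num.min (1 / 2) (a ^+ 2) <= p.
Proof.
move=> p_ge0 tail; rewrite ge_min; case: (lerP (1 / 2) p) => //= p_lt.
have : a ^+ 2 * (1 / 4) <= a ^+ 2 * (1 - p) ^+ 2 by rewrite ler_wpM2l ?sqr_ge0 // expr2; nra.
lra.
Qed.

Lemma block_count_bound (R : realFieldType) (K psi m n : R) : 0 < m -> 0 <= n ->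
  512 * K ^+ 2 <= psi * m -> 4 * m <= psi * n ->
  256 * (K ^+ 2 * n / m ^+ 2) + 5 / 4 <= psi * n / m.
Proof.
move=> m_gt0 n_ge0 Km mn; have m_neq0 : m != 0 by rewrite gt_eqF.
have half : 256 * (K ^+ 2 * n / m ^+ 2) <= psi * n / m / 2.
  have -> : 256 * (K ^+ 2 * n / m ^+ 2) = 512 * K ^+ 2 * (n / m ^+ 2) / 2 by field.
  have -> : psi * n / m / 2 = psi * m * (n / m ^+ 2) / 2 by field.
  by rewrite ler_pM2r // ler_wpM2r // divr_ge0 ?sqr_ge0.
have : 4 <= psi * n / m by rewrite ler_pdivlMr.
lra.
Qed.

Lemma exists_nat_ge (R : archiFieldType) (x : R) : exists2 n : nat, (0 < n)%N & x <= n%:R.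
Proof.
exists (Num.bound `|x|).+1 => //; apply: le_trans (ler_norm x) _; apply: ltW.
by apply: lt_le_trans (archi_boundP (normr_ge0 x)) _; rewrite ler_nat.
Qed.

Section FiniteExpectation.
Variables (R : realFieldType) (T : finType) (w : T -> R).
Hypothesis w_ge0 : forall t, 0 <= w t.
Hypothesis w_sum1 : \sum_t w t = 1.

Definition expect (F : T -> R) := \sum_t w t * F t.
Definition prob (P : pred T) := expect (fun t => (P t)%:R).

Lemma eq_expect F G : F =1 G -> expect F = expect G.
Proof. by move=> eFG; apply: eq_bigr => t _; rewrite eFG. Qed.

Lemma expect_cst c : expect (fun _ => c) = c.
Proof. by rewrite /expect -big_distrl /= w_sum1 mul1r. Qed.

Lemma expectD F G : expect (fun t => F t + G t) = expect F + expect G.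
Proof. by rewrite /expect -big_split; apply: eq_bigr => t _; rewrite mulrDr. Qed.

Lemma expectZ c F : expect (fun t => c * F t) = c * expect F.
Proof. by rewrite /expect big_distrr; apply: eq_bigr => t _; rewrite mulrCA. Qed.

Lemma expectN F : expect (fun t => - F t) = - expect F.
Proof. by rewrite -mulN1r -expectZ; apply: eq_expect => t; rewrite mulN1r. Qed.

Lemma expectB F G : expect (fun t => F t - G t) = expect F - expect G.
Proof. by rewrite expectD expectN. Qed.

Lemma expect_sum (I : Type) (r : seq I) (F : I -> T -> R) :
  expect (fun t => \sum_(i <- r) F i t) = \sum_(i <- r) expect (F i).
Proof. by rewrite /expect exchange_big; apply: eq_bigr => t _; rewrite big_distrr. Qed.

Lemma expect_ge0 F : (forall t, 0 <= F t) -> 0 <= expect F.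
Proof. by move=> F0; apply: sumr_ge0 => t _; apply: mulr_ge0. Qed.

Lemma ler_expect F G : (forall t, F t <= G t) -> expect F <= expect G.
Proof. by move=> FG; apply: ler_sum => t _; apply: ler_wpM2l. Qed.

Lemma expect_CauchySchwarz F G :
  expect (fun t => F t * G t) ^+ 2 <=
  expect (fun t => F t ^+ 2) * expect (fun t => G t ^+ 2).
Proof.
pose EF2 := expect (fun t => F t ^+ 2); pose EG2 := expect (fun t => G t ^+ 2).
pose EFG := expect (fun t => F t * G t).
have lagrange_identity : \sum_s \sum_t w s * w t * (F s * G t - F t * G s) ^+ 2 =
    2 * (EF2 * EG2 - EFG ^+ 2).
  have prodE : EF2 * EG2 = \sum_s \sum_t (w s * F s ^+ 2) * (w t * G t ^+ 2).
    by rewrite /EF2 /EG2 /expect big_distrl; apply: eq_bigr => s _; rewrite big_distrr.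
  have prodE' : EF2 * EG2 = \sum_s \sum_t (w t * F t ^+ 2) * (w s * G s ^+ 2).
    by rewrite prodE exchange_big.
  have sqrE : EFG ^+ 2 = \sum_s \sum_t (w s * (F s * G s)) * (w t * (F t * G t)).
    by rewrite expr2 /EFG /expect big_distrl; apply: eq_bigr => s _; rewrite big_distrr.
  have -> : 2 * (EF2 * EG2 - EFG ^+ 2) = EF2 * EG2 + EF2 * EG2 - 2 * EFG ^+ 2 by ring.
  rewrite {1}prodE prodE' sqrE -big_split big_distrr -sumrB /=; apply: eq_bigr => s _.
  rewrite -big_split big_distrr -sumrB /=; apply: eq_bigr => t _; ring.
have : 0 <= \sum_s \sum_t w s * w t * (F s * G t - F t * G s) ^+ 2.
  by do 2![apply: sumr_ge0 => ? _]; rewrite mulr_ge0 ?sqr_ge0 ?mulr_ge0.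
by rewrite lagrange_identity pmulr_rge0 ?subr_ge0.
Qed.

Lemma expect_indicator_sqr Z (P : pred T) :
  expect (fun t => Z t * (P t)%:R) ^+ 2 <= expect (fun t => Z t ^+ 2) * prob P.
Proof.
apply: le_trans (expect_CauchySchwarz _ _) _.
suff -> : expect (fun t => (P t)%:R ^+ 2) = prob P by [].
by apply: eq_expect => t; case: (P t); rewrite ?expr1n ?expr0n.
Qed.

Lemma prob_ge0 P : 0 <= prob P.
Proof. by apply: expect_ge0 => t; apply: ler0n. Qed.

Lemma prob_le1 P : prob P <= 1.
Proof. by rewrite -(expect_cst 1); apply: ler_expect => t; rewrite lern1 leq_b1. Qed.

Lemma probC P : prob (predC P) = 1 - prob P.
Proof.
by rewrite -(expect_cst 1) -expectB; apply: eq_expect => t /=; case: (P t); rewrite ?subrr ?subr0.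
Qed.

Lemma subset_prob (P Q : pred T) : (forall t, P t -> Q t) -> prob P <= prob Q.
Proof. by move=> PQ; apply: ler_expect => t; case: (boolP (P t)) => [/PQ -> | _]. Qed.

Lemma markov_sqr Z (P : pred T) x : 0 < x -> (forall t, P t -> x ^+ 2 <= Z t ^+ 2) ->
  prob P <= expect (fun t => Z t ^+ 2) / x ^+ 2.
Proof.
move=> x_gt0 PZ; rewrite mulrC -expectZ; apply: ler_expect => t.
case: (boolP (P t)) => [/PZ | _]; last by rewrite mulr_ge0 ?invr_ge0 ?sqr_ge0.
by rewrite mulrC ler_pdivlMr ?exprn_gt0 // mul1r.
Qed.

Lemma expect_mul_indicatorC Z (P : pred T) : expect Z = 0 ->
  expect (fun t => Z t * (P t)%:R) = - expect (fun t => Z t * (predC P t)%:R).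
Proof.
move=> EZ; apply/eqP; rewrite -subr_eq0 opprK -expectD -[X in _ == X]EZ.
by apply/eqP/eq_expect => t /=; case: (P t); rewrite /= ?mulr1 ?mulr0 ?addr0 ?add0r.
Qed.

Lemma moments_add_indep X Y : expect X = 0 -> expect Y = 0 ->
  (forall i j, expect (fun t => X t ^+ i * Y t ^+ j) =
               expect (fun t => X t ^+ i) * expect (fun t => Y t ^+ j)) ->
  expect (fun t => (X t + Y t) ^+ 2) =
    expect (fun t => X t ^+ 2) + expect (fun t => Y t ^+ 2) /\
  expect (fun t => (X t + Y t) ^+ 4) = expect (fun t => X t ^+ 4) +
    6 * (expect (fun t => X t ^+ 2) * expect (fun t => Y t ^+ 2)) + expect (fun t => Y t ^+ 4).
Proof.
move=> EX0 EY0 indep.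
have EX1 : expect (fun t => X t ^+ 1) = 0 by rewrite -EX0; apply: eq_expect => t; rewrite expr1.
have EY1 : expect (fun t => Y t ^+ 1) = 0 by rewrite -EY0; apply: eq_expect => t; rewrite expr1.
pose XY i j t := X t ^+ i * Y t ^+ j.
split.
  rewrite (eq_expect _ (G := fun t => X t ^+ 2 + (2 * XY 1%N 1%N t + Y t ^+ 2))); last first.
    by move=> t; rewrite /XY; ring.
  by rewrite !expectD expectZ indep EX1 mul0r mulr0 add0r.
rewrite (eq_expect _ (G := fun t => X t ^+ 4 + (4 * XY 3%N 1%N t + (6 * XY 2%N 2%N t +
    (4 * XY 1%N 3%N t + Y t ^+ 4))))); last by move=> t; rewrite /XY; ring.
by rewrite !expectD !expectZ !indep EX1 EY1 !(mulr0, mul0r) !add0r addrA.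
Qed.

Lemma one_sided_chebyshev Z (V x : R) :
  expect Z = 0 -> expect (fun t => Z t ^+ 2) <= V -> 0 < x ->
  x ^+ 2 * (1 - prob (fun t => Z t < x)) ^+ 2 <= V * prob (fun t => Z t < x).
Proof.
move=> EZ EZ2 x_gt0; pose P : pred T := fun t => Z t < x; rewrite -/(prob P).
have p_le1 : prob P <= 1 by apply: prob_le1.
have tail_mass : x * (1 - prob P) <= - expect (fun t => Z t * (P t)%:R).
  rewrite (expect_mul_indicatorC _ EZ) opprK -probC -expectZ; apply: ler_expect => t /=.
  by rewrite /P; case: (ltrP (Z t) x) => Zx; rewrite /= ?mulr0 ?mulr1.
have mass_ge0 : 0 <= x * (1 - prob P) by rewrite mulr_ge0 ?subr_ge0 // ltW.
have mass_sqr : (x * (1 - prob P)) ^+ 2 <= expect (fun t => Z t * (P t)%:R) ^+ 2.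
  by rewrite -(sqrrN (expect _)) ler_sqr ?nnegrE // (le_trans mass_ge0).
rewrite -exprMn; apply: le_trans mass_sqr _; apply: le_trans (expect_indicator_sqr _ _) _.
by rewrite ler_wpM2r ?prob_ge0.
Qed.

End FiniteExpectation.

Section FourthMomentTail.
Variables (R : rcfType) (T : finType) (w : T -> R).
Hypothesis w_ge0 : forall t, 0 <= w t.
Hypothesis w_sum1 : \sum_t w t = 1.
Local Notation expect := (expect w).
Local Notation prob := (prob w).

Lemma sqrt_le_expect_abs Z (V : R) :
  expect (fun t => Z t ^+ 2) = V -> expect (fun t => Z t ^+ 4) <= 4 * V ^+ 2 -> 0 < V ->
  Num.sqrt V <= 4 * expect (fun t => `|Z t|).
Proof.
move=> EZ2 EZ4 V_gt0; set s := Num.sqrt V; have s_gt0 : 0 < s by rewrite sqrtr_gt0.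
have sV : s ^+ 2 = V by rewrite sqr_sqrtr // ltW.
have := ler_expect w_ge0 (fun t => sqr_le_abs_quartic (Z t) (ltW s_gt0)).
rewrite expectD !expectZ EZ2 sV; set EA := expect _ => quartic.
have : s ^+ 3 * s <= s ^+ 3 * (4 * EA).
  rewrite -subr_ge0; have -> : s ^+ 3 * (4 * EA) - s ^+ 3 * s =
    (16 * s ^+ 3 * EA + 4 * (s ^+ 2) ^+ 2 - 8 * s ^+ 2 * s ^+ 2) / 4 by field.
  by rewrite divr_ge0 // subr_ge0 sV (le_trans quartic) // lerD2l.
by rewrite ler_pM2l ?exprn_gt0.
Qed.

(* E|Z| >= sqrt V / 4 gives E[-Z; Z < -y] >= sqrt V / 16, and Cauchy-Schwarz turns
   this into a lower bound on the probability of {Z < -y}. *)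
Lemma fourth_moment_left_tail Z (V y : R) :
  expect Z = 0 -> expect (fun t => Z t ^+ 2) = V -> expect (fun t => Z t ^+ 4) <= 4 * V ^+ 2 ->
  0 < V -> 0 <= y -> 256 * y ^+ 2 <= V -> 1 / 256 <= prob (fun t => Z t < - y).
Proof.
move=> EZ EZ2 EZ4 V_gt0 y_ge0 yV; pose P : pred T := fun t => Z t < - y; rewrite -/(prob P).
have abs_mass := sqrt_le_expect_abs EZ2 EZ4 V_gt0; set s := Num.sqrt V in abs_mass.
have s_gt0 : 0 < s by rewrite sqrtr_gt0.
have sV : s ^+ 2 = V by rewrite sqr_sqrtr // ltW.
have y_le : 16 * y <= s.
  rewrite -ler_sqr ?nnegrE ?mulr_ge0 ?(ltW s_gt0) // sV.
  by apply: le_trans yV; rewrite exprMn; lra.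
have tail_mass : s / 16 <= - expect (fun t => Z t * (P t)%:R).
  rewrite (expect_mul_indicatorC _ EZ) opprK.
  have : expect (fun t => 1 / 2 * `|Z t| + 1 / 2 * Z t - y) <=
         expect (fun t => Z t * (predC P t)%:R).
    apply: (ler_expect w_ge0) => t; rewrite /P /=; case: (ltrP (Z t) (- y)) => Zy /=.
      by rewrite mulr0 ltr0_norm; lra.
    by rewrite mulr1; case: (lerP 0 (Z t)) => Z0; [rewrite ger0_norm | rewrite ltr0_norm]; lra.
  rewrite expectB expectD !expectZ EZ (expect_cst w_sum1); lra.
have : (s / 16) ^+ 2 <= V * prob P.
  have := expect_indicator_sqr w_ge0 Z P; rewrite EZ2; apply: le_trans.
  rewrite -(sqrrN (expect _)) ler_sqr ?nnegrE //.
    by rewrite divr_ge0 ?ltW.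
  by apply: le_trans tail_mass; rewrite divr_ge0 ?ltW.
rewrite exprMn sV mulrC -ler_pdivrMl //.
by have -> : V^-1 * (16^-1 ^+ 2 * V) = 1 / 256 by field; rewrite gt_eqF.
Qed.

End FourthMomentTail.

Section BernoulliProduct.
Variables (R : realFieldType) (N : nat) (q : 'I_N -> R).
Hypothesis q01 : forall n, 0 <= q n <= 1.
Local Notation ballot := {ffun 'I_N -> bool}.

Definition pbern (x : ballot) : R := \prod_n (if x n then q n else 1 - q n).
Local Notation E := (expect pbern).

Lemma pbern_ge0 x : 0 <= pbern x.
Proof. by apply: prodr_ge0 => n _; have := q01 n; case: (x n); lra. Qed.

Lemma expect_prod (g : 'I_N -> bool -> R) :
  E (fun x => \prod_n g n (x n)) = \prod_n (q n * g n true + (1 - q n) * g n false).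
Proof.
pose b n c : R := if c then q n else 1 - q n.
have split (x : ballot) : pbern x * \prod_n g n (x n) = \prod_n (b n (x n) * g n (x n)).
  by rewrite big_split.
rewrite /expect (eq_bigr _ (fun x _ => split x)) -(bigA_distr_bigA (fun n c => b n c * g n c)).
by apply: eq_bigr => n _; rewrite big_bool.
Qed.

Lemma pbern_sum1 : \sum_x pbern x = 1.
Proof.
transitivity (E (fun x => \prod_n (fun _ _ => 1 : R) n (x n))).
  by apply: eq_bigr => x _; rewrite big1_eq mulr1.
by rewrite (expect_prod (fun _ _ => 1)) big1 // => n _; ring.
Qed.

Lemma expect_coord n (h : bool -> R) :
  E (fun x => h (x n)) = q n * h true + (1 - q n) * h false.
Proof.
have := expect_prod (fun m b => if m == n then h b else 1).
rewrite (bigD1 n) //= eqxx big1 ?mulr1 => [<-|m /negbTE -> ]; last by ring.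
by apply: eq_expect => x; rewrite (bigD1 n) //= eqxx big1 ?mulr1 // => m /negbTE ->.
Qed.

Definition depends_on (A : {set 'I_N}) (F : ballot -> R) :=
  forall x y : ballot, {in A, x =1 y} -> F x = F y.

Lemma depends_on_sub (A B : {set 'I_N}) F : A \subset B -> depends_on A F -> depends_on B F.
Proof. by move=> /fintype.subsetP AB FA x y xy; apply: FA => n /AB; apply: xy. Qed.

(* [\prod_n coord_match A y n (x n)] is the indicator of [y] being the ballot that
   agrees with [x] on [A] and is [false] off [A]. *)
Definition coord_match (A : {set 'I_N}) (y : ballot) n (b : bool) : R :=
  (((n \in A) && b) == y n)%:R.

Lemma depends_on_sum_match A F : depends_on A F ->
  forall x, F x = \sum_y F y * \prod_n coord_match A y n (x n).
Proof.
move=> FA x; pose xA : ballot := [ffun n => (n \in A) && x n].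
have match_xA : \prod_n coord_match A xA n (x n) = 1.
  by apply: big1 => n _; rewrite /coord_match /xA ffunE eqxx.
have match_other y : y != xA -> \prod_n coord_match A y n (x n) = 0.
  move=> yx; have [n yn] : exists n, y n != xA n.
    apply/existsP; apply: contraR yx; rewrite negb_exists => /forallP yxA.
    by apply/eqP/ffunP => n; apply/eqP; rewrite -[_ == _]negbK.
  rewrite (bigD1 n) //= /coord_match.
  have -> : (n \in A) && x n = xA n by rewrite /xA ffunE.
  by rewrite eq_sym (negbTE yn) mul0r.
rewrite (bigD1 xA) //= match_xA mulr1 big1 ?addr0 => [|y /match_other ->]; last by rewrite mulr0.
by apply: FA => n nA; rewrite /xA ffunE nA.
Qed.

Lemma expect_depends_on B H : depends_on B H ->
  E H = \sum_y H y * \prod_n (q n * coord_match B y n true + (1 - q n) * coord_match B y n false).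
Proof.
move=> HB; rewrite (eq_expect _ (depends_on_sum_match HB)) expect_sum.
by apply: eq_bigr => y _; rewrite expectZ (expect_prod (coord_match B y)).
Qed.

Lemma expect_indep (A : {set 'I_N}) F G : depends_on A F -> depends_on (~: A) G ->
  E (fun x => F x * G x) = E F * E G.
Proof.
move=> FA GA; rewrite (expect_depends_on FA) (expect_depends_on GA) big_distrl.
rewrite (eq_expect _ (G := fun x : ballot => \sum_y \sum_z F y * G z *
    \prod_n (coord_match A y n (x n) * coord_match (~: A) z n (x n)))); last first.
  move=> x; rewrite {1}(depends_on_sum_match FA x) (depends_on_sum_match GA x) big_distrl.
  apply: eq_bigr => y _; rewrite big_distrr; apply: eq_bigr => z _; rewrite big_split /=; ring.
rewrite expect_sum; apply: eq_bigr => y _; rewrite expect_sum big_distrr; apply: eq_bigr => z _.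
rewrite expectZ (expect_prod (fun n b => coord_match A y n b * coord_match (~: A) z n b)).
rewrite /= mulrACA -big_split; congr (_ * _); apply: eq_bigr => n _.
by rewrite /coord_match inE; case: (n \in A) => /=; ring.
Qed.

Definition dev n (x : ballot) : R := (x n)%:R - q n.
Definition bvar n : R := q n * (1 - q n).

Lemma bvar_ge0 n : 0 <= bvar n.
Proof. by have := q01 n; rewrite /bvar => /andP[q0 q1]; rewrite mulr_ge0 ?subr_ge0. Qed.

Lemma bvar_le n : bvar n <= 1 / 4.
Proof. by rewrite /bvar -subr_ge0 (_ : _ - _ = (q n - 1 / 2) ^+ 2) ?sqr_ge0 //; field. Qed.

Lemma expect_dev n : E (dev n) = 0.
Proof. by rewrite (expect_coord n (fun b => b%:R - q n)) /=; ring. Qed.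

Lemma expect_dev_sqr n : E (fun x => dev n x ^+ 2) = bvar n.
Proof. by rewrite (expect_coord n (fun b => (b%:R - q n) ^+ 2)) /= /bvar; ring. Qed.

Lemma expect_dev_quart n : E (fun x => dev n x ^+ 4) <= bvar n.
Proof.
rewrite (expect_coord n (fun b => (b%:R - q n) ^+ 4)) /=.
have -> : q n * (1 - q n) ^+ 4 + (1 - q n) * (0 - q n) ^+ 4 = bvar n - 3 * bvar n ^+ 2.
  by rewrite /bvar; ring.
by rewrite lerBlDr lerDl mulr_ge0 ?sqr_ge0.
Qed.

Lemma depends_on_comp A F (h : R -> R) : depends_on A F -> depends_on A (fun x => h (F x)).
Proof. by move=> FA x y xy; rewrite (FA x y xy). Qed.

Definition dev_sum (s : seq 'I_N) x := \sum_(n <- s) dev n x.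

Lemma expect_dev_sum s : E (dev_sum s) = 0.
Proof. by rewrite expect_sum big1 // => n _; apply: expect_dev. Qed.

Lemma depends_on_dev_sum (A : {set 'I_N}) (s : seq 'I_N) : {subset s <= A} ->
  depends_on A (dev_sum s).
Proof. by move=> sA x y xy; apply: eq_big_seq => n /sA nA; rewrite /dev xy. Qed.

Lemma dev_sum_moments (s : seq 'I_N) : uniq s ->
  let V := \sum_(n <- s) bvar n in
  E (fun x => dev_sum s x ^+ 2) = V /\ E (fun x => dev_sum s x ^+ 4) <= 3 * V ^+ 2 + V.
Proof.
elim: s => [_|a s IH /andP[a_s s_uniq]] V.
  have E0 k : E (fun x => dev_sum [::] x ^+ k.+1) = 0.
    rewrite (eq_expect _ (G := fun=> 0)) ?(expect_cst pbern_sum1) // => x.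
    by rewrite /dev_sum big_nil expr0n.
  by rewrite /V !E0 big_nil expr0n /= mulr0 addr0.
have [IH2 IH4] := IH s_uniq; set Vs := \sum_(n <- s) bvar n in IH2 IH4.
have indep i j : E (fun x => dev a x ^+ i * dev_sum s x ^+ j) =
    E (fun x => dev a x ^+ i) * E (fun x => dev_sum s x ^+ j).
  apply: (@expect_indep [set a]); apply: (depends_on_comp (fun r => r ^+ _)).
    by move=> x y xy; rewrite /dev xy ?set11.
  by apply: depends_on_dev_sum => n ns; rewrite !inE; apply: contraNneq a_s => <-.
have [E2 E4] := moments_add_indep (expect_dev a) (expect_dev_sum s) indep.
have consE x : dev_sum (a :: s) x = dev a x + dev_sum s x by rewrite /dev_sum big_cons.
rewrite /V big_cons !(eq_expect _ (fun x => congr1 (fun r => r ^+ _) (consE x))) E2 E4.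
rewrite expect_dev_sqr IH2 -/Vs; split => //.
have := expect_dev_quart a; have := bvar_ge0 a.
have : 0 <= Vs by rewrite sumr_ge0 // => n _; apply: bvar_ge0.
by move: IH4; set D4 := E _; set d4 := E _ => *; nra.
Qed.

End BernoulliProduct.

Section BalancedBlocks.
Variables (R : realFieldType) (v : nat -> R) (delta : R).
Hypothesis v_ge0 : forall i, 0 <= v i.
Hypothesis v_le : forall i, v i <= delta.

Definition cumsum k := \sum_(i < k) v i.

Lemma cumsumS k : cumsum k.+1 = cumsum k + v k.
Proof. by rewrite /cumsum big_ord_recr. Qed.

Lemma le_cumsum : {homo cumsum : i k / (i <= k)%N >-> i <= k}.
Proof.
move=> i k /subnK <-; elim: (k - i)%N => [|d IH]; first by rewrite add0n.
by rewrite addSn cumsumS (le_trans IH) // lerDl.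
Qed.

Lemma cumsum_ge0 k : 0 <= cumsum k.
Proof. by rewrite (le_trans _ (le_cumsum (leq0n k))) // /cumsum big_ord0. Qed.

Definition mass_below k a := \sum_(i < k) (if cumsum i < a then v i else 0).

Lemma mass_belowS k a : mass_below k.+1 a = mass_below k a + (if cumsum k < a then v k else 0).
Proof. by rewrite /mass_below big_ord_recr. Qed.

Lemma mass_below_id k a : cumsum k < a -> mass_below k a = cumsum k.
Proof.
elim: k => [|k IH] ka; first by rewrite /mass_below /cumsum !big_ord0.
have ka' : cumsum k < a by apply: le_lt_trans ka; apply: le_cumsum.
by rewrite mass_belowS IH // ka' cumsumS.
Qed.

Lemma mass_below_le k a : 0 <= a -> mass_below k a <= a + delta.
Proof.
move=> a_ge0; have delta_ge0 : 0 <= delta := le_trans (v_ge0 0) (v_le 0).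
elim: k => [|k IH]; first by rewrite /mass_below big_ord0 addr_ge0.
rewrite mass_belowS; case: ifP => [ka|_]; last by rewrite addr0.
by rewrite mass_below_id // lerD // ltW.
Qed.

Lemma mass_below_ge k a : a <= cumsum k -> a <= mass_below k a.
Proof.
elim: k => [|k IH] ak; first by move: ak; rewrite /mass_below /cumsum !big_ord0.
rewrite mass_belowS; case: (ltrP (cumsum k) a) => ka; last by rewrite addr0 IH.
by rewrite mass_below_id // -cumsumS.
Qed.

Variables (N M : nat).
Hypothesis M_gt0 : (0 < M)%N.
Local Notation V := (cumsum N).

(* Block j collects the consecutive indices whose cumulative sum lies in
   [threshold j, threshold j.+1); the last threshold V + 1 exceeds every cumulative
   sum, so the M blocks partition the indices. *)

Definition threshold j : R := if (j < M)%N then j%:R * V / M%:R else V + 1.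

Definition block j := [set n : 'I_N | threshold j <= cumsum n < threshold j.+1].

Lemma threshold_le_total j : (j < M)%N -> threshold j <= V.
Proof.
move=> jM; rewrite /threshold jM ler_pdivrMr ?ltr0n // mulrC ler_wpM2l ?cumsum_ge0 //.
by rewrite ler_nat ltnW.
Qed.

Lemma threshold_ge0 j : 0 <= threshold j.
Proof.
rewrite /threshold; case: ifP => _; first by rewrite divr_ge0 ?mulr_ge0 ?cumsum_ge0.
by rewrite addr_ge0 ?cumsum_ge0.
Qed.

Lemma le_threshold i k : (i <= k <= M)%N -> threshold i <= threshold k.
Proof.
case/andP=> ik kM; case: (ltnP i M) => iM; last first.
  by rewrite /threshold !ifN -?leqNgt // (leq_trans iM).
case: (ltnP k M) => kM'; last first.
  by rewrite (le_trans (threshold_le_total iM)) // /threshold ifN -?leqNgt // lerDl.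
by rewrite /threshold iM kM' ler_wpM2r ?invr_ge0 ?ler0n // ler_wpM2r ?cumsum_ge0 ?ler_nat.
Qed.

Lemma block_partition (n : 'I_N) : \sum_(j < M) (n \in block j)%:R = 1 :> R.
Proof.
pose below j : R := (cumsum n < threshold j)%R%:R.
have step j : (j < M)%N -> (n \in block j)%:R = below j.+1 - below j.
  move=> jM; have thr_j : threshold j <= threshold j.+1 by rewrite le_threshold ?leqnSn.
  rewrite /below inE; case: (lerP (threshold j) (cumsum n)) => cj;
    case: (ltrP (cumsum n) (threshold j.+1)) => cj' /=; rewrite ?subrr ?subr0 //; lra.
rewrite (eq_bigr _ (fun (j : 'I_M) _ => step j (ltn_ord j))).
rewrite -(big_mkord xpredT (fun j => below j.+1 - below j)) telescope_sumr //.
rewrite /below /threshold M_gt0 ltnn !mul0r.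
have c0 := cumsum_ge0 n; have cV : cumsum n <= V by apply: le_cumsum; apply: ltnW.
by case: (ltrP (cumsum n) (V + 1)) => ?; case: (ltrP (cumsum n) 0) => ? //=; rewrite ?subr0 //; lra.
Qed.

Lemma block_mass j : (j < M)%N -> V / M%:R - delta <= \sum_(n in block j) v n.
Proof.
move=> jM; have M_pos : 0 < M%:R :> R by rewrite ltr0n.
have -> : \sum_(n in block j) v n = mass_below N (threshold j.+1) - mass_below N (threshold j).
  rewrite big_mkcond /mass_below -sumrB; apply: eq_bigr => n _; rewrite inE.
  have thr_j : threshold j <= threshold j.+1 by rewrite le_threshold ?leqnSn.
  case: (lerP (threshold j) (cumsum n)) => cj; case: (ltrP (cumsum n) (threshold j.+1)) => cj' /=;
    rewrite ?subr0 ?subrr //; lra.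
have upper : j.+1%:R * V / M%:R <= mass_below N (threshold j.+1).
  case: (ltnP j.+1 M) => jM'.
    by have := mass_below_ge (threshold_le_total jM'); rewrite /threshold jM'.
  have jM_eq : j.+1 = M by apply/eqP; rewrite eqn_leq jM jM'.
  rewrite mass_below_id; last by rewrite /threshold jM_eq ltnn ltrDl.
  by rewrite jM_eq mulrAC mulfV ?mul1r // pnatr_eq0 -lt0n.
have lower : mass_below N (threshold j) <= j%:R * V / M%:R + delta.
  by have := mass_below_le N (threshold_ge0 j); rewrite /threshold jM.
have -> : V / M%:R = j.+1%:R * V / M%:R - j%:R * V / M%:R.
  by rewrite -!mulrBl -natrB // subSnn mul1r.
lra.
Qed.

End BalancedBlocks.

Section BlockAnticoncentration.
Variables (R : rcfType) (N : nat) (q : 'I_N -> R).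
Hypothesis q01 : forall n, 0 <= q n <= 1.
Local Notation ballot := {ffun 'I_N -> bool}.
Local Notation E := (expect (pbern q)).

Definition bvar_seq (i : nat) : R := if insub i is Some n then bvar q n else 0.

Lemma bvar_seqE (n : 'I_N) : bvar_seq n = bvar q n.
Proof. by rewrite /bvar_seq valK. Qed.

Lemma bvar_seq_ge0 i : 0 <= bvar_seq i.
Proof. by rewrite /bvar_seq; case: insub => // n; apply: bvar_ge0. Qed.

Lemma bvar_seq_le i : bvar_seq i <= 1 / 4.
Proof. by rewrite /bvar_seq; case: insub => [n|]; [apply: bvar_le | lra]. Qed.

Lemma sum_bvar_cumsum : \sum_n bvar q n = cumsum bvar_seq N.
Proof. by apply: eq_bigr => n _; rewrite bvar_seqE. Qed.

Lemma depends_on_prod (A : {set 'I_N}) J (F : nat -> ballot -> R) :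
  (forall j, (j < J)%N -> depends_on A (F j)) -> depends_on A (fun x => \prod_(j < J) F j x).
Proof. by move=> FA x y xy; apply: eq_bigr => j _; apply: FA. Qed.

Variables (M : nat) (sg y : R).
Hypotheses (M_gt0 : (0 < M)%N) (sg2 : sg ^+ 2 = 1) (y_ge0 : 0 <= y).
Hypothesis var_large : 256 * y ^+ 2 + 5 / 4 <= (\sum_n bvar q n) / M%:R.

Local Notation block := (block bvar_seq N M).
Definition block_event j (x : ballot) : R := (sg * dev_sum q (enum (block j)) x < - y)%R%:R.

Lemma block_event_prob j : (j < M)%N -> 1 / 256 <= E (block_event j).
Proof.
move=> jM; set VB := \sum_(n <- enum (block j)) bvar q n.
have VB_ge : (\sum_n bvar q n) / M%:R - 1 / 4 <= VB.
  rewrite /VB big_enum /= sum_bvar_cumsum (eq_bigr _ (fun n _ => esym (bvar_seqE n))).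
  exact: (block_mass bvar_seq_ge0 bvar_seq_le N M_gt0 jM).
have [EZ2 EZ4] := dev_sum_moments q01 (enum_uniq (mem (block j))); rewrite -/VB in EZ2 EZ4.
have VB1 : 1 <= VB by move: var_large VB_ge; have := sqr_ge0 y; lra.
apply: (fourth_moment_left_tail (pbern_ge0 q01) (pbern_sum1 q) (V := VB)).
- by rewrite expectZ expect_dev_sum mulr0.
- by under eq_expect do rewrite exprMn sg2 mul1r.
- under eq_expect do rewrite exprMn -[4%N]/(2 * 2)%N exprM sg2 expr1n mul1r.
  by apply: le_trans EZ4 _; rewrite expr2; nra.
- lra.
- by [].
- by move: var_large VB_ge; lra.
Qed.

Lemma blocks_event_prob J : (J <= M)%N ->
  (1 / 256) ^+ J <= E (fun x => \prod_(j < J) block_event j x).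
Proof.
elim: J => [_|J IH JM].
  rewrite (eq_expect _ (G := fun=> 1)) ?(expect_cst (pbern_sum1 q)) ?expr0 // => x.
  by rewrite big_ord0.
(* The blocks are consecutive: blocks 0..J-1 lie in A, block J outside it. *)
pose A := [set n : 'I_N | cumsum bvar_seq n < threshold bvar_seq N M J].
have event_dep j : depends_on (block j) (block_event j).
  apply: (depends_on_comp (fun r => (sg * r < - y)%R%:R)).
  by apply: depends_on_dev_sum => n; rewrite mem_enum.
have prefix_dep : depends_on A (fun x => \prod_(j < J) block_event j x).
  apply: depends_on_prod => j jJ; apply: depends_on_sub (event_dep j).
  apply/fintype.subsetP => n; rewrite !inE => /andP[_ lt_n]; apply: lt_le_trans lt_n _.
  by rewrite le_threshold ?jJ ?(ltnW JM) //; apply: bvar_seq_ge0.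
have last_dep : depends_on (~: A) (block_event J).
  apply: depends_on_sub (event_dep J).
  by apply/fintype.subsetP => n; rewrite !inE => /andP[le_n _]; rewrite -leNgt.
rewrite (eq_expect _ (G := fun x => (\prod_(j < J) block_event j x) * block_event J x)); last first.
  by move=> x; rewrite big_ord_recr.
have c_ge0 : 0 <= 1 / 256 :> R by lra.
rewrite (expect_indep q prefix_dep last_dep) exprSr ler_pM ?exprn_ge0 //.
  exact: IH (ltnW JM).
exact: block_event_prob.
Qed.

Lemma dev_sum_blocks x :
  \sum_(j < M) dev_sum q (enum (block j)) x = dev_sum q (index_enum 'I_N) x.
Proof.
rewrite /dev_sum; under eq_bigr do rewrite big_enum /= big_mkcond /=.
rewrite exchange_big /=; apply: eq_bigr => n _.
rewrite (eq_bigr (fun j : 'I_M => (n \in block j)%:R * dev q n x)); last first.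
  by move=> j _; case: (n \in block j); rewrite ?mul1r ?mul0r.
by rewrite -big_distrl /= (block_partition bvar_seq_ge0 M_gt0) mul1r.
Qed.

Lemma dev_sum_left_tail :
  (1 / 256) ^+ M <= prob (pbern q) (fun x => sg * dev_sum q (index_enum 'I_N) x < - (M%:R * y)).
Proof.
apply: le_trans (blocks_event_prob (leqnn M)) _; apply: (ler_expect (pbern_ge0 q01)) => x /=.
case: (boolP [forall j : 'I_M, sg * dev_sum q (enum (block j)) x < - y]) => [/forallP all_tail|].
  have -> : sg * dev_sum q (index_enum 'I_N) x < - (M%:R * y).
    have -> : - (M%:R * y) = \sum_(j < M) - y by rewrite sumr_const card_ord mulNrn mulr_natl.
    rewrite -dev_sum_blocks mulr_sumr.
    by apply: ltr_sum => [|j _]; [apply/hasP; exists (Ordinal M_gt0); rewrite ?mem_index_enum | ].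
  by apply: prodr_ile1 => j _; rewrite /block_event ler0n lern1 leq_b1.
rewrite negb_forall => /existsP[j not_tail].
by rewrite (bigD1 j) //= /block_event (negbTE not_tail) mul0r ler0n.
Qed.
End BlockAnticoncentration.

Section VotingInstance.
Variables (R : realType) (mu PL PH PhL PhH : R).
Hypotheses (PL_gt0 : 0 < PL) (PH_gt0 : 0 < PH) (PLH : PL + PH = 1).
Hypotheses (PhL01 : 0 <= PhL <= 1) (PhH01 : 0 <= PhH <= 1).
Variables (N : nat) (Sig : 'I_N -> strategy R).
Hypothesis Sig_valid : forall n, valid_strategy (Sig n).
Hypothesis N_gt0 : (0 < N)%N.
Local Notation ballot := {ffun 'I_N -> bool}.

Definition pvoteA (w : state) (n : 'I_N) : R :=
  let p := if w is H then PhH else PhL in p * (Sig n).2 + (1 - p) * (Sig n).1.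

Lemma pvoteA01 w n : 0 <= pvoteA w n <= 1.
Proof.
have [/andP[b0 b1] /andP[b0' b1']] := Sig_valid n.
have /andP[p0 p1] : 0 <= (if w is H then PhH else PhL) <= 1 by case: w.
rewrite /pvoteA; set p := (if w is H then _ else _) in p0 p1 *.
by apply/andP; split; nra.
Qed.

Local Notation E w := (expect (pbern (pvoteA w))).
Local Notation Pr w := (prob (pbern (pvoteA w))).

Let pbern_vote_ge0 w := pbern_ge0 (pvoteA01 w).
Let pbern_vote_sum1 w := pbern_sum1 (pvoteA w).

Lemma condE_expect w F : condE PhL PhH w Sig F = E w F.
Proof.
rewrite /condE exchange_big; apply: eq_bigr => x _; rewrite -big_distrl /=; congr (_ * _).
rewrite /jprob -(bigA_distr_bigA (fun n s => psig PhL PhH w s * pvote (Sig n) s (x n))).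
by apply: eq_bigr => n _; rewrite big_bool /psig /pvote /pvoteA; case: w; case: (x n) => /=; ring.
Qed.

Definition err w := Pr w (fun x => if w is H then ~~ Awins mu x else Awins mu x).

Lemma fidelityE : fidelity mu PL PH PhL PhH Sig = 1 - (PL * err L + PH * err H).
Proof.
have winA w : E w (fun x => if Awins mu x then 1 else 0) = Pr w (fun x => Awins mu x).
  by apply: eq_expect => x; case: Awins.
have winR w : E w (fun x => if Awins mu x then 0 else 1) = 1 - Pr w (fun x => Awins mu x).
  by rewrite -(probC (pbern_vote_sum1 w)); apply: eq_expect => x /=; case: Awins.
have errH : err H = 1 - Pr H (fun x => Awins mu x) by rewrite -(probC (pbern_vote_sum1 H)).
rewrite /fidelity /lambdaR /lambdaA !condE_expect winA winR errH.
set a := Pr L _; set b := Pr H _.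
by transitivity (PL + PH - (PL * a + PH * (1 - b))); [ring | rewrite PLH].
Qed.

Lemma err01 w : 0 <= err w <= 1.
Proof.
by rewrite (prob_ge0 (pbern_vote_ge0 w)) (prob_le1 (pbern_vote_ge0 w) (pbern_vote_sum1 w)).
Qed.

Lemma fidelity_le_err w : fidelity mu PL PH PhL PhH Sig <= 1 - Num.min PL PH * err w.
Proof.
rewrite fidelityE lerD2l lerN2.
have /andP[eL0 _] := err01 L; have /andP[eH0 _] := err01 H.
have mL : Num.min PL PH * err L <= PL * err L by rewrite ler_wpM2r // ge_min lexx.
have mH : Num.min PL PH * err H <= PH * err H by rewrite ler_wpM2r // ge_min lexx orbT.
have := mulr_ge0 (ltW PL_gt0) eL0; have := mulr_ge0 (ltW PH_gt0) eH0.
by case: w; lra.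
Qed.

Lemma fidelity_ge_err e : (forall w, err w <= e) -> 1 - e <= fidelity mu PL PH PhL PhH Sig.
Proof.
move=> err_le; rewrite fidelityE lerD2l lerN2 -[X in _ <= X]mul1r -PLH mulrDl.
by apply: lerD; apply: ler_wpM2l => //; apply: ltW.
Qed.

Definition sgn (w : state) : R := if w is H then 1 else -1.
Definition excess w := if w is H then fH mu PhL PhH Sig else fL mu PhL PhH Sig.
(* Oriented so that large values favour the correct outcome in state w. *)
Definition signed_dev w x := sgn w * dev_sum (pvoteA w) (index_enum 'I_N) x.

Lemma sgn_sqr w : sgn w ^+ 2 = 1.
Proof. by case: w; rewrite /= ?expr1n ?sqrrN ?expr1n. Qed.

Lemma nA_dev_sum w x : nA R x = \sum_n pvoteA w n + dev_sum (pvoteA w) (index_enum 'I_N) x.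
Proof.
rewrite /dev_sum /dev sumrB addrC subrK /nA -sum1_card natr_sum big_mkcond /=.
by apply: eq_bigr => n _; rewrite inE; case: (x n).
Qed.

Lemma sum_pvoteA w : sgn w * (\sum_n pvoteA w n - mu * N%:R) = N%:R * excess w.
Proof.
have N_neq0 : N%:R != 0 :> R by rewrite pnatr_eq0 -lt0n.
have XnE n : condE PhL PhH w Sig (Xn R n) = pvoteA w n.
  by rewrite condE_expect (expect_coord _ n (fun b => b%:R)) /=; ring.
case: w XnE => XnE; rewrite /= /fH /fL.
  have XnL n : condE PhL PhH L Sig (fun x => 1 - Xn R n x) = 1 - pvoteA L n.
    by rewrite condE_expect expectB (expect_cst (pbern_vote_sum1 _)) -condE_expect XnE.
  by rewrite (eq_bigr _ (fun n _ => XnL n)) sumrB sumr_const card_ord; field.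
by rewrite (eq_bigr _ (fun n _ => XnE n)); field.
Qed.

Lemma signed_margin w x :
  sgn w * (nA R x - mu * N%:R) = signed_dev w x + N%:R * excess w.
Proof.
by rewrite -sum_pvoteA (nA_dev_sum w) /signed_dev; ring.
Qed.

Lemma err_le_dev w :
  err w <= Pr w (fun x => signed_dev w x <= - (N%:R * excess w)).
Proof.
apply: (subset_prob (pbern_vote_ge0 w)) => x.
rewrite -subr_le0 opprK -signed_margin /Awins.
by case: w => /=; rewrite ?mul1r ?mulN1r -?ltNge => ?; lra.
Qed.

Lemma err_ge_dev w :
  Pr w (fun x => signed_dev w x < - (N%:R * excess w)) <= err w.
Proof.
apply: (subset_prob (pbern_vote_ge0 w)) => x.
rewrite -subr_lt0 opprK -signed_margin /Awins.
by case: w => /=; rewrite ?mul1r ?mulN1r -?ltNge => ?; lra.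
Qed.

Lemma expect_signed_dev w : E w (signed_dev w) = 0.
Proof. by rewrite expectZ expect_dev_sum mulr0. Qed.

Lemma expect_signed_dev_sqr w : E w (fun x => signed_dev w x ^+ 2) = \sum_n bvar (pvoteA w) n.
Proof.
under eq_expect do rewrite exprMn sgn_sqr mul1r.
by have [-> _] := dev_sum_moments (pvoteA01 w) (index_enum_uniq 'I_N).
Qed.

Lemma sum_bvar_le w : \sum_n bvar (pvoteA w) n <= N%:R / 4.
Proof.
rewrite -[N in N%:R]card_ord -sumr_const mulr_suml /= ler_sum // => n _.
by rewrite bvar_le.
Qed.

Lemma condVarE w : condVar PhL PhH w Sig = \sum_n bvar (pvoteA w) n.
Proof.
have [E2 _] := dev_sum_moments (pvoteA01 w) (index_enum_uniq 'I_N).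
have E1 := expect_dev_sum (pvoteA w) (index_enum 'I_N); have Ec := expect_cst (pbern_vote_sum1 w).
set m := \sum_n pvoteA w n; set D := dev_sum _ _ in E1 E2 *.
rewrite /condVar !condE_expect (eq_expect _ (nA_dev_sum w)) expectD Ec E1.
rewrite (eq_expect _ (G := fun x => m ^+ 2 + (2 * m * D x + D x ^+ 2))) => [|x]; last first.
  by rewrite (nA_dev_sum w) /m /D; ring.
by rewrite !expectD Ec expectZ E1 E2 /m; ring.
Qed.

Lemma fexcess_le w : fexcess mu PhL PhH Sig <= excess w.
Proof. by case: w; rewrite /fexcess ge_min lexx ?orbT. Qed.

Lemma fexcess_attained : exists w, excess w = fexcess mu PhL PhH Sig.
Proof. by rewrite /fexcess; case: leP => _; [exists H | exists L]. Qed.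

Local Notation f := (fexcess mu PhL PhH Sig).
Local Notation fid := (fidelity mu PL PH PhL PhH Sig).
Local Notation s := (Num.sqrt (N%:R : R)).


Lemma sqrtN_gt0 : 0 < s.
Proof. by rewrite sqrtr_gt0 ltr0n. Qed.

Lemma sqrtN_sqr : s ^+ 2 = N%:R.
Proof. by rewrite sqr_sqrtr ?ler0n. Qed.

Lemma fidelity_le1 : fid <= 1.
Proof.
apply: le_trans (fidelity_le_err L) _; rewrite lerBlDr lerDl mulr_ge0 //.
  by rewrite le_min !ltW.
by have /andP[] := err01 L.
Qed.

Lemma fidelity_ge_excess : 0 < f -> 1 - 1 / (4 * (s * f) ^+ 2) <= fid.
Proof.
move=> f_gt0; have Nf_gt0 : 0 < N%:R * f by rewrite mulr_gt0 ?ltr0n.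
have -> : 1 / (4 * (s * f) ^+ 2) = N%:R / 4 / (N%:R * f) ^+ 2.
  by rewrite exprMn sqrtN_sqr; field; rewrite pnatr_eq0 -lt0n N_gt0 gt_eqF.
apply: fidelity_ge_err => // w; apply: le_trans (err_le_dev w) _.
apply: le_trans (markov_sqr (pbern_vote_ge0 w) (Z := signed_dev w) Nf_gt0 _) _.
  move=> x /= dev_le; rewrite -[X in _ <= X]sqrrN ler_sqr ?nnegrE ?(ltW Nf_gt0) //.
    by rewrite lerNr (le_trans dev_le) // lerN2 ler_wpM2l ?ler0n ?fexcess_le.
  rewrite oppr_ge0 (le_trans dev_le) // oppr_le0 ltW // (lt_le_trans Nf_gt0) //.
  by rewrite ler_wpM2l ?ler0n ?fexcess_le.
rewrite expect_signed_dev_sqr; apply: ler_wpM2r; rewrite ?invr_ge0 ?sqr_ge0 ?sum_bvar_le //.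
Qed.

Lemma fidelity_le_tail d w : excess w = f ->
  d <= Pr w (fun x => signed_dev w x < - (N%:R * f)) -> fid <= 1 - Num.min PL PH * d.
Proof.
move=> ew tail; apply: le_trans (fidelity_le_err w) _.
rewrite lerD2l lerN2; apply: ler_wpM2l; first by rewrite le_min !ltW.
by apply: le_trans tail _; rewrite -ew; apply: err_ge_dev.
Qed.

Lemma fidelity_le_neg_excess a : a < 0 -> s * f < a ->
  fid <= 1 - Num.min PL PH * Num.min (1 / 2) (a ^+ 2).
Proof.
move=> a_lt0 sf_lt; have [w ew] := fexcess_attained.
apply: (fidelity_le_tail ew); set x := - a * s.
have x_gt0 : 0 < x by rewrite mulr_gt0 ?oppr_gt0 ?sqrtN_gt0.
have x_le : x <= - (N%:R * f).
  rewrite -sqrtN_sqr lerNr /x mulNr opprK expr2 -mulrA [a * s]mulrC ler_pM2l ?sqrtN_gt0 //.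
  exact: ltW.
have EZ2 : E w (fun t => signed_dev w t ^+ 2) <= N%:R / 4.
  by rewrite expect_signed_dev_sqr sum_bvar_le.
have := one_sided_chebyshev (pbern_vote_ge0 w) (pbern_vote_sum1 w) (expect_signed_dev w) EZ2 x_gt0.
set p := Pr w _ => tail.
have sub : p <= Pr w (fun t => signed_dev w t < - (N%:R * f)).
  by apply: subset_prob => // t /lt_le_trans; apply.
apply: le_trans sub; apply: min_half_le; first exact: prob_ge0.
rewrite -(@ler_pM2l _ N%:R) ?ltr0n //.
have -> : N%:R * (a ^+ 2 * (1 - p) ^+ 2) = x ^+ 2 * (1 - p) ^+ 2.
  by rewrite /x exprMn sqrrN sqrtN_sqr; ring.
by have -> : N%:R * (p / 4) = N%:R / 4 * p by ring.
Qed.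

Lemma fidelity_le_bounded_excess (M : nat) (K psi : R) : (0 < M)%N -> 0 <= K ->
  512 * K ^+ 2 <= psi * M%:R -> 4 * M%:R <= psi * N%:R ->
  (forall w, psi * N%:R <= condVar PhL PhH w Sig) -> s * f < K ->
  fid <= 1 - Num.min PL PH * (1 / 256) ^+ M.
Proof.
move=> M_gt0 K_ge0 MK NM var_ge sf_lt; have [w ew] := fexcess_attained.
apply: (fidelity_le_tail ew); set y := K * s / M%:R.
have M_pos : 0 < M%:R :> R by rewrite ltr0n.
have y_ge0 : 0 <= y by rewrite divr_ge0 ?ler0n // mulr_ge0 // ltW // sqrtN_gt0.
have My : M%:R * y = K * s by rewrite /y mulrC divfK // gt_eqF.
have var_large : 256 * y ^+ 2 + 5 / 4 <= (\sum_n bvar (pvoteA w) n) / M%:R.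
  have -> : y ^+ 2 = K ^+ 2 * N%:R / M%:R ^+ 2 by rewrite /y !exprMn sqrtN_sqr exprVn.
  apply: le_trans (block_count_bound M_pos (ler0n _ N) MK NM) _.
  by rewrite ler_pM2r ?invr_gt0 // -condVarE.
apply: le_trans (dev_sum_left_tail (pvoteA01 w) M_gt0 (sgn_sqr w) y_ge0 var_large) _.
apply: subset_prob => // t /lt_le_trans; apply; rewrite My lerN2.
have -> : N%:R * f = s * (s * f) by rewrite mulrA -expr2 sqrtN_sqr.
by rewrite [K * s]mulrC ler_pM2l ?sqrtN_gt0 // ltW.
Qed.

End VotingInstance.

Local Open Scope classical_set_scope.
Local Open Scope ring_scope.

Section Liminf.
Variable R : realType.
Implicit Types u : nat -> \bar R.

Lemma limn_einf_sup u : limn_einf u = ereal_sup (range (einfs u)).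
Proof. by rewrite limn_einf_lim; apply: cvg_lim => //; apply: cvg_einfs_sup. Qed.

Lemma limn_einf_lt u a : (limn_einf u < a)%E -> forall n, exists2 k, (n <= k)%N & (u k < a)%E.
Proof.
rewrite limn_einf_sup => lt_a n.
have : (einfs u n < a)%E by apply: le_lt_trans lt_a; apply: ereal_sup_ubound; exists n.
by move=> /ereal_inf_lt[_ [k /= nk <-] uk]; exists k.
Qed.

Lemma limn_einf_pinfty u : limn_einf u = +oo%E ->
  forall M : R, exists n, forall k, (n <= k)%N -> (M%:E < u k)%E.
Proof.
rewrite limn_einf_sup => u_oo M.
have : (M%:E < ereal_sup (range (einfs u)))%E by rewrite u_oo ltry.
move=> /ereal_sup_gt[_ [n _ <-] Mn]; exists n => k nk.
by apply: lt_le_trans Mn _; apply: ereal_inf_lbound; exists k.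
Qed.

Lemma not_cvg_frequently_le (A : nat -> R) (l c : R) : 0 < c ->
  (forall n, exists2 k, (n <= k)%N & A k <= l - c) -> ~ A @ \oo --> l.
Proof.
move=> c_gt0 freq /cvgrPdist_lt /(_ c c_gt0) [n0 _ near_l].
have [k kn Ak] := freq n0; have := near_l k kn; have := ler_norm (l - A k); lra.
Qed.

End Liminf.

Section Asymptotics.
Variables (R : realType) (mu PL PH PhL PhH : R).
Hypotheses (PL_gt0 : 0 < PL) (PH_gt0 : 0 < PH) (PLH : PL + PH = 1).
Hypotheses (PhL01 : 0 <= PhL <= 1) (PhH01 : 0 <= PhH <= 1).
Variable Sig : forall N : nat, 'I_N -> strategy R.
Hypothesis Sig_valid : forall N (n : 'I_N), valid_strategy (@Sig N n).
Local Notation G N := (Num.sqrt (N%:R : R) * fexcess mu PhL PhH (@Sig N)).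
Local Notation fid := (fun N => fidelity mu PL PH PhL PhH (@Sig N)).

Lemma index_gt0 N : G N != 0 -> (0 < N)%N.
Proof. by rewrite lt0n; apply: contraNneq => ->; rewrite sqrtr0 mul0r. Qed.

Lemma fidelity_cvg1 : limn_einf (fun N => (G N)%:E) = +oo%E -> fid @ \oo --> (1 : R).
Proof.
move=> G_oo; apply/cvgrPdist_lt => e e_gt0.
have e_inv : 0 < e^-1 by rewrite invr_gt0.
have [n0 G_large] := limn_einf_pinfty G_oo (e^-1 + 1).
exists n0 => // k /= /G_large; rewrite lte_fin => Gk.
have k_gt0 : (0 < k)%N by apply: index_gt0; rewrite gt_eqF //; lra.
have f_gt0 : 0 < fexcess mu PhL PhH (@Sig k).
  by rewrite -(pmulr_rgt0 _ (sqrtN_gt0 R k_gt0)); lra.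
have := fidelity_ge_excess PL_gt0 PH_gt0 PLH PhL01 PhH01 (@Sig_valid k) k_gt0 f_gt0.
have := fidelity_le1 mu PL_gt0 PH_gt0 PLH PhL01 PhH01 (@Sig_valid k).
move: Gk; set Gk := G k => Gk_large fid_le fid_ge; rewrite ger0_norm ?subr_ge0 //.
have : 1 / (4 * Gk ^+ 2) < e.
  have Gk_gt0 : 0 < Gk by lra.
  rewrite ltr_pdivrMr; last by rewrite mulr_gt0 ?exprn_gt0.
  have eG : 1 < e * Gk.
    by rewrite -[1](mulfV (lt0r_neq0 e_gt0)) ltr_pM2l //; lra.
  have : Gk <= 4 * Gk ^+ 2 by rewrite expr2; nra.
  by move=> /(ler_wpM2l (ltW e_gt0)); lra.
lra.
Qed.

Lemma fidelity_not_cvg1_neg : (limn_einf (fun N => (G N)%:E) < 0)%E -> ~ fid @ \oo --> (1 : R).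
Proof.
move=> G_neg; have [a a_lt0 lt_a] : exists2 a : R, a < 0 & (limn_einf (fun N => (G N)%:E) < a%:E)%E.
  move: G_neg; case: (limn_einf _) => [r | // | _].
    by rewrite lte_fin => r_lt0; exists (r / 2); rewrite ?lte_fin; lra.
  by exists (-1); rewrite ?ltNyr //; lra.
apply: (not_cvg_frequently_le (c := Num.min PL PH * Num.min (1 / 2) (a ^+ 2))).
  apply: mulr_gt0; first by rewrite lt_min PL_gt0 PH_gt0.
  by rewrite lt_min exprn_even_gt0 //= lt_eqF // andbT; lra.
move=> n; have [k kn] := limn_einf_lt lt_a n; rewrite lte_fin => Gk; exists k => //.
have k_gt0 : (0 < k)%N by apply: index_gt0; rewrite lt_eqF // (lt_trans Gk).
exact: (fidelity_le_neg_excess PL_gt0 PH_gt0 PLH PhL01 PhH01 (@Sig_valid k) k_gt0 a_lt0 Gk).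
Qed.

Lemma fidelity_not_cvg1_bounded : (limn_einf (fun N => (G N)%:E) < +oo)%E ->
  (exists2 psi : R, 0 < psi & forall N w, psi * N%:R <= condVar PhL PhH w (@Sig N)) ->
  ~ fid @ \oo --> (1 : R).
Proof.
move=> G_fin [psi psi_gt0 var_ge].
have [K K_gt0 lt_K] : exists2 K : R, 0 < K & (limn_einf (fun N => (G N)%:E) < K%:E)%E.
  move: G_fin; case: (limn_einf _) => [r _ | // | _].
    by exists (Num.max 1 (r + 1)); rewrite ?lt_max ?ltr01 // lte_fin lt_max ltrDl ltr01 orbT.
  by exists 1; rewrite ?ltNyr.
have [M M_gt0] := exists_nat_ge (512 * K ^+ 2 / psi); rewrite ler_pdivrMr // [_ * psi]mulrC => MK.
have [B B_gt0] := exists_nat_ge (4 * M%:R / psi); rewrite ler_pdivrMr // => BM.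
apply: (not_cvg_frequently_le (c := Num.min PL PH * (1 / 256) ^+ M)).
  by rewrite mulr_gt0 ?lt_min ?PL_gt0 ?PH_gt0 ?exprn_gt0 //; lra.
move=> n; have [k kn] := limn_einf_lt lt_K (maxn n B); rewrite lte_fin => Gk.
have Bk : (B <= k)%N := leq_trans (leq_maxr n B) kn.
exists k; first exact: leq_trans (leq_maxl n B) kn.
apply: (fidelity_le_bounded_excess PL_gt0 PH_gt0 PLH PhL01 PhH01 (@Sig_valid k)
  (leq_trans B_gt0 Bk) M_gt0 (ltW K_gt0) MK _ (var_ge k) Gk).
by apply: le_trans BM _; rewrite mulrC ler_pM2l // ler_nat.
Qed.

End Asymptotics.

Unset Implicit Arguments.

Theorem theorem4 (R : realType) (mu PL PH PhL PhH : R)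
  (hmu : 0 < mu < 1) (hPL : 0 < PL) (hPH : 0 < PH) (hP : PL + PH = 1)
  (hPhL : 0 <= PhL <= 1) (hPhH : 0 <= PhH <= 1) (hsig : PhL < PhH)
  (Sig : forall N : nat, 'I_N -> strategy R)
  (hSig : forall N (n : 'I_N), valid_strategy (Sig N n)) :
  let g : nat -> \bar R :=
    fun N => (Num.sqrt (N%:R : R) * fexcess mu PhL PhH (Sig N))%:E in
  let Afid : nat -> R := fun N => fidelity mu PL PH PhL PhH (Sig N) in
  [/\ limn_einf g = +oo%E -> Afid @ \oo --> (1 : R),
      (limn_einf g < 0)%E -> ~ (Afid @ \oo --> (1 : R)) &
      ((0 <= limn_einf g)%E /\ (limn_einf g < +oo)%E ->
       (exists2 psi : R, 0 < psi &
          forall N w, psi * N%:R <= condVar PhL PhH w (Sig N)) ->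
       ~ (Afid @ \oo --> (1 : R)))].
Proof.
move=> g Afid; rewrite {}/g {}/Afid; split.
- exact: (fidelity_cvg1 hPL hPH hP hPhL hPhH hSig).
- exact: (fidelity_not_cvg1_neg hPL hPH hP hPhL hPhH hSig).
- by move=> [_ g_fin]; apply: (fidelity_not_cvg1_bounded hPL hPH hP hPhL hPhH hSig g_fin).
Qed.
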